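(* Setting: $k$ tail observations $Z^{(1)},\dots,Z^{(k)}\in\mathbb R^p$ (optionally with proxy values $P^{(t)}\in\mathbb R^d$), $V=\{1,\dots,p\}$, true DAG $G^*$ with parent sets $\mathrm{pa}^*(j)$ and skeleton $E^*_{\mathrm{skel}}$, and a random candidate undirected edge set $\hat E_{\mathrm{skel}}$; asymptotics as $k,p\to\infty$ with $s_{\max}$ possibly growing. Let $c_3>0$ and, for each $j$, let $\mathcal A^{c_3}_j$ be the class of $A\subseteq V\setminus\{j\}$ with $|A|\le s_{\max}$ and $A\subseteq\mathrm{nb}(j;E)$ for some edge set $E\supseteq E^*_{\mathrm{skel}}$ with $|E|\le c_3ps_{\max}$. Let $\{R^\star_{j\mid A}(u)\}$ be deterministic population risks and $\hat R_{j\mid A}(u)=\mathrm{SAE}_j(A)/k$. Assume: (S) with probability tending to one, $E^*_{\mathrm{skel}}\subseteq\hat E_{\mathrm{skel}}$ and $|\hat E_{\mathrm{skel}}|\le c_3ps_{\max}$, and each true parent set has size at most $s_{\max}$; (C) $\eta_k:=\max_{j}\sup_{A\in\mathcal A_j^{c_3}}|\hat R_{j\mid A}(u)-R^\star_{j\mid A}(u)|=O_p\big(\sqrt{(s_{\max}+1)\log p/k}\big)$; (i) there is $\Delta_{\mathrm{miss}}>0$ with $R^\star_{j\mid A}(u)-R^\star_{j\mid\mathrm{pa}^*(j)}(u)\ge\Delta_{\mathrm{miss}}$ for all $j$ and all $A\in\mathcal A^{c_3}_j$ with $A\not\supseteq\mathrm{pa}^*(j)$; (ii) $R^\star_{j\mid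 A}(u)=R^\star_{j\mid\mathrm{pa}^*(j)}(u)$ for all $j$ and all $A\in\mathcal A^{c_3}_j$ with $A\supseteq\mathrm{pa}^*(j)$; (iii) there are constants $0<r_{\min}(u)\le r_{\max}(u)<\infty$ with $r_{\min}(u)\le R^\star_{j\mid A}(u)\le r_{\max}(u)$ for all $j$ and $A\in\mathcal A^{c_3}_j$; (iv) (equal-risk superset fit-gain control) with $\hat f_j(A)=\frac k2\log\hat R_{j\mid A}(u)$, $\max_j\sup\big(\hat f_j(A^* )-\hat f_j(A)\big)/|A\setminus A^*|=O_p(1)$, the supremum over pairs $A^*\subsetneq A$ in $\mathcal A^{c_3}_j$ with $R^\star_{j\mid A}(u)=R^\star_{j\mid A^*}(u)$; (v) $s_{\max}\sqrt{\log p/k}=o(1)$. Let $\hat G$ be any global minimizer of $\hat S(G)=\sum_{j=1}^p\mathrm{Score}(j,\mathrm{pa}_G(j))$ over DAGs $G$ on $V$ whose skeleton is contained in $\hat E_{\mathrm{skel}}$ and whose in-degrees are at most $s_{\max}$. Then $\mathbb P(\hat G=G^* )\to1$.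
   Context: Empirical score. For node $j$ and candidate parent set $A$, offsets are empirical $q$-quantiles ($q\in(0,1)$ fixed): $c_{\ell\to j}=\hat Q_q(\{Z^{(t)}_j-Z^{(t)}_\ell\}_{t=1}^k)$ for $\ell\in A$, $c_{r\to j}=\hat Q_q(\{Z^{(t)}_j-P^{(t)}_r\}_{t})$ for proxy components $r=1,\dots,d$ (omitted if no proxy), and $c_0=\hat Q_q(\{Z^{(t)}_j\}_t)$. The envelope fit is $\hat Z^{(t)}_j=\max\{c_0,\max_{\ell\in A}(Z^{(t)}_\ell+c_{\ell\to j}),\max_{r}(P^{(t)}_r+c_{r\to j})\}$ (a max over an empty set is $-\infty$), $\mathrm{SAE}_j(A)=\sum_{t=1}^k|Z^{(t)}_j-\hat Z^{(t)}_j|>0$, and $\mathrm{Score}(j,A)=\frac k2\log(\mathrm{SAE}_j(A)/k)+\frac12(\log k+2\gamma_{\mathrm{EBIC}}\log p)|A|$ with a fixed constant $\gamma_{\mathrm{EBIC}}\ge0$. $\mathrm{nb}(j;E)$ is the set of neighbours of $j$ in edge set $E$. *)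

From HB Require Import structures.
From mathcomp Require Import all_boot all_order all_algebra.
From mathcomp Require Import all_classical all_reals all_analysis.
Set Implicit Arguments. Unset Strict Implicit. Unset Printing Implicit Defensive.
Import Order.TTheory GRing.Theory Num.Theory.
Import numFieldNormedType.Exports.

Local Open Scope ring_scope.

Section Score.
Variable R : realType.

(* Empirical q-quantile (inverse empirical CDF, lower convention):
   the ceil(q k)-th order statistic, i.e. the smallest sample value y with
   #{t | x_t <= y} >= q k. *)
Definition emp_quantile (q : R) (k : nat) (x : 'I_k -> R) : R :=
  let s := sort <=%R [seq x t | t <- enum 'I_k] in
  nth 0 s (find (fun i : nat => q * k%:R <= i.+1%:R) (iota 0 k)).

(* Observations Z t l (t : sample index, l : coordinate), proxies Px t r
   (d = 0 encodes "no proxy"). *)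
Definition SAE (q : R) (k p d : nat) (Z : 'I_k -> 'I_p -> R)
    (Px : 'I_k -> 'I_d -> R) (j : 'I_p) (A : {set 'I_p}) : R :=
  let c0 := emp_quantile q (fun t => Z t j) in
  let cl := fun l => emp_quantile q (fun t => Z t j - Z t l) in
  let cr := fun r => emp_quantile q (fun t => Z t j - Px t r) in
  \sum_(t < k) `| Z t j - Num.max (\big[Num.max/c0]_(l in A) (Z t l + cl l))
                                  (\big[Num.max/c0]_(r < d) (Px t r + cr r)) |.

Definition Rhat (q : R) (k p d : nat) (Z : 'I_k -> 'I_p -> R)
    (Px : 'I_k -> 'I_d -> R) (j : 'I_p) (A : {set 'I_p}) : R :=
  SAE q Z Px j A / k%:R.

Definition fhat (q : R) (k p d : nat) (Z : 'I_k -> 'I_p -> R)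
    (Px : 'I_k -> 'I_d -> R) (j : 'I_p) (A : {set 'I_p}) : R :=
  k%:R / 2 * ln (Rhat q Z Px j A).

Definition Score (q gamma : R) (k p d : nat) (Z : 'I_k -> 'I_p -> R)
    (Px : 'I_k -> 'I_d -> R) (j : 'I_p) (A : {set 'I_p}) : R :=
  k%:R / 2 * ln (SAE q Z Px j A / k%:R)
  + 2^-1 * (ln k%:R + 2 * gamma * ln p%:R) * #|A|%:R.

End Score.

Section Graphs.
Variable p : nat.

Definition parent_rel (pa : {ffun 'I_p -> {set 'I_p}}) : rel 'I_p :=
  fun i j => i \in pa j.

(* acyclic: no directed cycle (an edge i -> j followed by a directed path back
   from j to i); self-loops are excluded since connect is reflexive. *)
Definition is_dag (pa : {ffun 'I_p -> {set 'I_p}}) : Prop :=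
  forall i j : 'I_p, i \in pa j -> ~~ connect (parent_rel pa) j i.

Definition is_edgeset (E : {set {set 'I_p}}) : Prop :=
  forall e, e \in E -> #|e| = 2.

Definition skel (pa : {ffun 'I_p -> {set 'I_p}}) : {set {set 'I_p}} :=
  [set [set i; j] | j : 'I_p, i : 'I_p in pa j].

Definition nb (j : 'I_p) (E : {set {set 'I_p}}) : {set 'I_p} :=
  [set i | [set i; j] \in E].

End Graphs.

Definition cand_class (R : realType) (c3 : R) (p s : nat)
    (Gstar : {ffun 'I_p -> {set 'I_p}}) (j : 'I_p) (A : {set 'I_p}) : Prop :=
  j \notin A /\ (#|A| <= s)%N /\
  exists E : {set {set 'I_p}}, is_edgeset E /\ skel Gstar \subset E /\
     (#|E|%:R <= c3 * p%:R * s%:R) /\ A \subset nb j E.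

Definition feasible (p s : nat) (Ehat : {set {set 'I_p}})
    (G : {ffun 'I_p -> {set 'I_p}}) : Prop :=
  is_dag G /\ skel G \subset Ehat /\ forall j, (#|G j| <= s)%N.

Definition Shat (R : realType) (q gamma : R) (k p d : nat) (Z : 'I_k -> 'I_p -> R)
    (Px : 'I_k -> 'I_d -> R) (G : {ffun 'I_p -> {set 'I_p}}) : R :=
  \sum_(j < p) Score q gamma Z Px j (G j).

(* "with probability tending to one" (inner-probability convention): there are
   measurable events B n contained in E n with P(B n) -> 1. *)
Definition wptt1 (R : realType) (d : measure_display) (T : measurableType d)
    (P : probability T R) (E : nat -> set T) : Prop :=
  exists B : nat -> set T, (forall n, measurable (B n)) /\
    (forall n, (B n `<=` E n)%classic) /\
    ((fun n => fine (P (B n))) @ \oo --> (1 : R))%classic.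

(* X_n = O_p(r_n) formulated through the event family E M n = {"X_n <= M r_n"}:
   for every eps > 0 there are M, N with P(E M n) >= 1 - eps for n >= N
   (inner-probability convention). *)
Definition Op_events (R : realType) (d : measure_display) (T : measurableType d)
    (P : probability T R) (E : R -> nat -> set T) : Prop :=
  forall eps : R, 0 < eps -> exists M : R, exists N : nat, forall n, (N <= n)%N ->
    exists B : set T, measurable B /\ (B `<=` E M n)%classic /\ 1 - eps <= fine (P B).

(* On the event where the skeleton screen succeeds and every empirical risk of
   a candidate parent set is within eta_k of its population value, the parent
   sets of all feasible DAGs are candidates, and Score(j, .) is uniquely
   minimised at pa*(j).  A set missing a true parent has risk at least
   Delta_miss above pa*(j), which turns into a fit loss of order k exceeding
   the penalty s_max (log k + 2 gamma log p) / 2 by (v).  A strict superset of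
   pa*(j) has the same population risk, so by (iv) its fit gain is O(1) per
   extra parent, while each parent costs a penalty growing like log k.  As the
   score is a sum over nodes, G* is then the unique global minimiser. *)

From HB Require Import structures.
From mathcomp Require Import all_boot all_order all_algebra.
From mathcomp Require Import all_classical all_reals all_analysis.
From mathcomp Require Import ring lra.
Import Order.TTheory GRing.Theory Num.Theory.
Import numFieldNormedType.Exports.
Local Open Scope ring_scope.

Set Implicit Arguments.
Unset Strict Implicit.
Unset Printing Implicit Defensive.

Section likely_events.
Context (R : realType) (dT : measure_display) (T : measurableType dT)
  (P : probability T R).
Local Open Scope classical_set_scope.

Definition eventually_likely (E : nat -> set T) :=
  forall eps : R, 0 < eps -> \forall n \near \oo,
    exists B, [/\ measurable B, B `<=` E n & 1 - eps <= fine (P B)].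

Lemma fine_probability_le1 (A : set T) : measurable A -> fine (P A) <= 1.
Proof.
by move=> mA; rewrite -lee_fin fineK ?fin_num_measure// probability_le1.
Qed.

Lemma fine_probability_setI_ge (A B : set T) : measurable A -> measurable B ->
  fine (P A) + fine (P B) - 1 <= fine (P (A `&` B)).
Proof.
move=> mA mB; have mAB : measurable (A `&` B) by exact: measurableI.
have : (P (~` A `|` ~` B) <= P (~` A) + P (~` B))%E.
  exact: measureU2 (measurableC mA) (measurableC mB).
rewrite -setCI !probability_setC//.
have finE X : measurable X -> P X = (fine (P X))%:E.
  by move=> mX; rewrite fineK// fin_num_measure.
by rewrite (finE _ mA) (finE _ mB) (finE _ mAB) -!EFinB -EFinD lee_fin => ?; lra.
Qed.

Lemma wptt1_eventually_likely (E : nat -> set T) :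
  wptt1 P E -> eventually_likely E.
Proof.
move=> [B [mB [BE cvB]]] eps eps_gt0.
near=> n; exists (B n); split => //.
have : `|1 - fine (P (B n))| < eps.
  by near: n; exact: (cvgrPdist_lt _ _).1 cvB _ eps_gt0.
by rewrite ltr_norml => /andP[_]; lra.
Unshelve. all: by end_near.
Qed.

Lemma eventually_likely_wptt1 (E : nat -> set T) :
  eventually_likely E -> wptt1 P E.
Proof.
move=> likelyE.
pose tol n : R := n.+1%:R^-1.
pose S n := [set fine (P B) | B in [set B | measurable B /\ B `<=` E n]].
have supS n : has_sup (S n).
  split; first by exists 0, set0; rewrite ?measure0 //=; split.
  by exists 1 => _ [B [mB _] <-]; exact: fine_probability_le1.
have nearly_sup n : exists B, [/\ measurable B, B `<=` E n &
    sup (S n) - tol n < fine (P B)].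
  have tol_gt0 : 0 < tol n by rewrite invr_gt0 ltr0Sn.
  have [_ [B [mB BE] <-] ltB] := sup_adherent tol_gt0 (supS n).
  by exists B.
have /choice[B hB] := nearly_sup.
exists B; split; first by move=> n; case: (hB n).
split; first by move=> n; case: (hB n).
apply/cvgrPdist_lt => e e_gt0.
have likely_half := likelyE _ (divr_gt0 e_gt0 (ltr0Sn _ 1)).
near=> n.
have [C [mC CE PC]] : exists C,
    [/\ measurable C, C `<=` E n & 1 - e / 2 <= fine (P C)] by near: n.
have [mBn _ PBn] := hB n.
have PC_le : fine (P C) <= sup (S n) by apply: sup_upper_bound => //; exists C.
have tol_lt : tol n < e / 2.
  rewrite /tol invf_plt ?posrE ?divr_gt0// invf_div.
  have : 2 / e < n%:R by near: n; exact: nbhs_infty_gtr.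
  by move/lt_le_trans; apply; rewrite ler_nat.
by rewrite ger0_norm ?subr_ge0 ?fine_probability_le1//; lra.
Unshelve. all: by end_near.
Qed.

Lemma wptt1_of_Op_events (S E : nat -> set T) (C D : R -> nat -> set T) :
  wptt1 P S -> Op_events P C -> Op_events P D ->
  (forall M1 M2, \forall n \near \oo, S n `&` C M1 n `&` D M2 n `<=` E n) ->
  wptt1 P E.
Proof.
move=> /wptt1_eventually_likely likelyS opC opD SCD_E.
apply: eventually_likely_wptt1 => eps eps_gt0.
have eps3_gt0 : 0 < eps / 3 by rewrite divr_gt0.
have [M1 [N1 likelyC]] := opC _ eps3_gt0.
have [M2 [N2 likelyD]] := opD _ eps3_gt0.
have likelyS3 := likelyS _ eps3_gt0.
near=> n.
have [BS [mBS BS_S PBS]] : exists B,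
    [/\ measurable B, B `<=` S n & 1 - eps / 3 <= fine (P B)] by near: n.
have [BC [mBC [BC_C PBC]]] : exists B,
    measurable B /\ B `<=` C M1 n /\ 1 - eps / 3 <= fine (P B).
  by apply: likelyC; near: n; exact: nbhs_infty_ge.
have [BD [mBD [BD_D PBD]]] : exists B,
    measurable B /\ B `<=` D M2 n /\ 1 - eps / 3 <= fine (P B).
  by apply: likelyD; near: n; exact: nbhs_infty_ge.
have mBSC : measurable (BS `&` BC) by exact: measurableI.
exists (BS `&` BC `&` BD); split; first exact: measurableI.
  have : S n `&` C M1 n `&` D M2 n `<=` E n by near: n.
  by apply: subset_trans => w [[/BS_S ? /BC_C ?] /BD_D ?].
have := fine_probability_setI_ge mBS mBC.
have := fine_probability_setI_ge mBSC mBD.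
lra.
Unshelve. all: by end_near.
Qed.
End likely_events.

Section dag_skeleton.
Variable p : nat.
Implicit Types (pa : {ffun 'I_p -> {set 'I_p}}) (i j : 'I_p).

Lemma dag_parent_neq pa i j : is_dag pa -> i \in pa j -> i != j.
Proof.
by move=> dag_pa ij; apply: contraTneq (dag_pa _ _ ij) => ->; rewrite connect0.
Qed.

Lemma mem_skel pa i j : i \in pa j -> [set i; j] \in skel pa.
Proof. by move=> ij; apply/imset2P; exists j i. Qed.

Lemma skel_edgeset pa : is_dag pa -> is_edgeset (skel pa).
Proof.
by move=> dag_pa _ /imset2P[j i _ ij ->]; rewrite cards2 (dag_parent_neq dag_pa ij).
Qed.

Lemma feasible_cand_class (R : realType) (c3 : R) (s : nat)
    (Ehat : {set {set 'I_p}}) (Gstar G : {ffun 'I_p -> {set 'I_p}}) j :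
  is_dag Gstar -> skel Gstar \subset Ehat -> #|Ehat|%:R <= c3 * p%:R * s%:R ->
  feasible s Ehat G -> cand_class c3 s Gstar j (G j).
Proof.
move=> dag_Gstar skel_Gstar card_Ehat [dag_G [skel_G deg_G]].
split; first by apply/negP => /(dag_parent_neq dag_G); rewrite eqxx.
split; first exact: deg_G.
exists (skel Gstar :|: skel G); split.
  by move=> e /setUP[]; apply: skel_edgeset.
split; first exact: finset.subsetUl.
split.
  apply: le_trans card_Ehat; rewrite ler_nat subset_leq_card//.
  by rewrite finset.subUset skel_Gstar.
by apply/fintype.subsetP => i iG; rewrite inE finset.in_setU (mem_skel iG) orbT.
Qed.
End dag_skeleton.

Definition penalty (R : realType) (gamma : R) (k p : nat) : R :=
  2^-1 * (ln k%:R + 2 * gamma * ln p%:R).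

Definition log_gap (R : realType) (Delta rmax : R) : R :=
  ln (1 + Delta / (2 * (rmax + Delta))).

Lemma ln_nat_ge0 (R : realType) (m : nat) : 0 <= ln m%:R :> R.
Proof. by case: m => [|m]; [rewrite ln0 | apply: ln_ge0; rewrite ler1n]. Qed.

Lemma penalty_ge0 (R : realType) (gamma : R) (k p : nat) :
  0 <= gamma -> 0 <= penalty gamma k p.
Proof.
move=> gamma_ge0; rewrite mulr_ge0// addr_ge0 ?ln_nat_ge0//.
by rewrite !mulr_ge0 ?ln_nat_ge0.
Qed.

Lemma log_gap_gt0 (R : realType) (Delta rmax : R) :
  0 < Delta -> 0 <= rmax -> 0 < log_gap Delta rmax.
Proof.
by move=> ? ?; apply: ln_gt0; rewrite ltrDl divr_gt0// mulr_gt0// ltr_wpDl.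
Qed.

Lemma log_gap_le_lnB (R : realType) (Delta rmin rmax eta r rA hr hA : R) :
  0 < Delta -> 0 < rmin -> eta <= rmin / 2 -> eta <= Delta / 4 ->
  rmin <= r <= rmax -> r + Delta <= rA -> `|hr - r| <= eta -> `|hA - rA| <= eta ->
  log_gap Delta rmax <= ln hA - ln hr.
Proof.
move=> Delta_gt0 rmin_gt0 eta_rmin eta_Delta /andP[rmin_r r_rmax] gap.
rewrite !ler_norml => /andP[hr_lo hr_hi] /andP[hA_lo hA_hi].
have hr_gt0 : 0 < hr by lra.
set c := Delta / (2 * (rmax + Delta)).
have c_gt0 : 0 < c by rewrite divr_gt0// mulr_gt0//; lra.
have c_scale : c * (rmax + Delta) = Delta / 2 by rewrite /c; field; lra.
have ratio : (1 + c) * hr <= hA.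
  have : c * hr <= c * (rmax + Delta) by rewrite ler_pM2l//; lra.
  by rewrite c_scale; nra.
rewrite lerBrDr /log_gap -/c -lnM ?posrE; [|lra|lra].
by rewrite ler_ln ?posrE//; nra.
Qed.

Section score_separation.
Variables (R : realType) (q gamma c3 : R) (k p d s : nat).
Variables (Z : 'I_k -> 'I_p -> R) (Px : 'I_k -> 'I_d -> R).
Variables (Gstar : {ffun 'I_p -> {set 'I_p}}) (Rstar : 'I_p -> {set 'I_p} -> R).
Variables (Delta rmin rmax eta Miv : R).

Local Notation cand := (cand_class c3 s Gstar).
Local Notation score := (Score q gamma Z Px).
Local Notation pen := (penalty gamma k p).

Hypothesis gamma_ge0 : 0 <= gamma.
Hypothesis Delta_gt0 : 0 < Delta.
Hypothesis rmin_gt0 : 0 < rmin.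
Hypothesis k_gt0 : (0 < k)%N.
Hypothesis deg_Gstar : forall j, (#|Gstar j| <= s)%N.
Hypothesis Rhat_near : forall j A, cand j A -> `|Rhat q Z Px j A - Rstar j A| <= eta.
Hypothesis missing_gap : forall j A, cand j A -> ~~ (Gstar j \subset A) ->
  Rstar j A - Rstar j (Gstar j) >= Delta.
Hypothesis superset_flat : forall j A, cand j A -> Gstar j \subset A ->
  Rstar j A = Rstar j (Gstar j).
Hypothesis Rstar_bounded : forall j A, cand j A -> rmin <= Rstar j A <= rmax.
Hypothesis fit_gain_le : forall j As A, cand j As -> cand j A ->
  As \proper A -> Rstar j A = Rstar j As ->
  (fhat q Z Px j As - fhat q Z Px j A) / #|A :\: As|%:R <= Miv.
Hypothesis eta_small : (0 < s)%N -> eta <= rmin / 2 /\ eta <= Delta / 4.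
Hypothesis penalty_lt_gap : pen * s%:R < k%:R / 2 * log_gap Delta rmax.
Hypothesis fit_gain_lt_penalty : Miv < pen.

Lemma ScoreE j A : score j A = fhat q Z Px j A + pen * #|A|%:R.
Proof. by []. Qed.

Lemma score_lt_proper_superset j A : cand j (Gstar j) -> cand j A ->
  Gstar j \proper A -> score j (Gstar j) < score j A.
Proof.
move=> cand_Gstar cand_A Gstar_A; rewrite !ScoreE.
have [sub_A [x xA xGstar]] := fintype.properP Gstar_A.
have extra_gt0 : 0 < #|A :\: Gstar j|%:R :> R.
  by rewrite ltr0n; apply/card_gt0P; exists x; rewrite !inE xA xGstar.
have cardA : #|A|%:R = #|Gstar j|%:R + #|A :\: Gstar j|%:R :> R.
  by rewrite cardsDS// -natrD subnKC// subset_leq_card.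
have := fit_gain_le cand_Gstar cand_A Gstar_A (superset_flat cand_A sub_A).
rewrite ler_pdivrMr// cardA => gain_le.
have : Miv * #|A :\: Gstar j|%:R < pen * #|A :\: Gstar j|%:R by rewrite ltr_pM2r.
lra.
Qed.

Lemma score_lt_missing_parent j A : cand j (Gstar j) -> cand j A ->
  ~~ (Gstar j \subset A) -> score j (Gstar j) < score j A.
Proof.
move=> cand_Gstar cand_A missing; rewrite !ScoreE.
have s_gt0 : (0 < s)%N.
  rewrite lt0n; apply: contra missing => /eqP s0.
  by move: (deg_Gstar j); rewrite s0 leqn0 cards_eq0 => /eqP ->; rewrite finset.sub0set.
have [eta_rmin eta_Delta] := eta_small s_gt0.
have ln_gap : log_gap Delta rmax <=
    ln (Rhat q Z Px j A) - ln (Rhat q Z Px j (Gstar j)).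
  apply: (log_gap_le_lnB Delta_gt0 rmin_gt0 eta_rmin eta_Delta
            (Rstar_bounded cand_Gstar) _ (Rhat_near cand_Gstar) (Rhat_near cand_A)).
  by have := missing_gap cand_A missing; lra.
have fit_gap : k%:R / 2 * log_gap Delta rmax <=
    fhat q Z Px j A - fhat q Z Px j (Gstar j).
  by rewrite /fhat -mulrBr ler_pM2l// divr_gt0// ltr0n.
have pen_ge0 := penalty_ge0 k p gamma_ge0.
have : pen * #|Gstar j|%:R <= pen * s%:R by rewrite ler_wpM2l// ler_nat.
have : 0 <= pen * #|A|%:R by rewrite mulr_ge0.
(* Opaque names keep lra from unfolding [fhat] into nonlinear terms. *)
move: fit_gap penalty_lt_gap; set fA := fhat _ _ _ _ A.
set fGstar := fhat _ _ _ _ (Gstar j); set g := log_gap _ _.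
lra.
Qed.

Lemma score_lt_true_parents j A : cand j (Gstar j) -> cand j A ->
  A != Gstar j -> score j (Gstar j) < score j A.
Proof.
move=> cand_Gstar cand_A A_neq.
have [Gstar_A|missing] := boolP (Gstar j \subset A).
  apply: score_lt_proper_superset => //.
  by rewrite finset.properEneq eq_sym A_neq.
exact: score_lt_missing_parent.
Qed.

Variable Ehat : {set {set 'I_p}}.
Hypothesis dag_Gstar : is_dag Gstar.
Hypothesis skel_Gstar : skel Gstar \subset Ehat.
Hypothesis card_Ehat : #|Ehat|%:R <= c3 * p%:R * s%:R.

Lemma Shat_minimizer_eq G : feasible s Ehat G ->
  (forall G', feasible s Ehat G' -> Shat q gamma Z Px G <= Shat q gamma Z Px G') ->
  G = Gstar.
Proof.
move=> feasible_G G_min.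
have feasible_Gstar : feasible s Ehat Gstar by [].
have cand_of X j : feasible s Ehat X -> cand j (X j).
  exact: feasible_cand_class dag_Gstar skel_Gstar card_Ehat.
apply/ffunP => j; apply/eqP/negPn/negP => G_neq.
have := G_min _ feasible_Gstar; rewrite /Shat (bigD1 j)//= [leRHS](bigD1 j)//=.
have := score_lt_true_parents (cand_of _ j feasible_Gstar) (cand_of _ j feasible_G) G_neq.
have : \sum_(i < p | i != j) score i (Gstar i) <= \sum_(i < p | i != j) score i (G i).
  apply: ler_sum => i _; have [-> //|G_neq_i] := eqVneq (G i) (Gstar i).
  by apply/ltW/score_lt_true_parents => //; apply: cand_of.
lra.
Qed.
End score_separation.

Lemma ln_gt_of_expR_lt (R : realType) (x y : R) : expR x < y -> x < ln y.
Proof.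
move=> lt_xy; rewrite -{1}[x]expRK ltr_ln ?posrE ?expR_gt0//.
exact: lt_trans (expR_gt0 x) lt_xy.
Qed.

Lemma sqrt_succ_mul_le (R : realType) (s : nat) (u : R) : (0 < s)%N -> 0 <= u ->
  Num.sqrt (s.+1%:R * u) <= 2 * (s%:R * Num.sqrt u).
Proof.
move=> s_gt0 u_ge0.
have -> : 2 * (s%:R * Num.sqrt u) = Num.sqrt ((2 * s%:R) ^+ 2 * u).
  by rewrite sqrtrM ?sqr_ge0// sqrtr_sqr ger0_norm ?mulr_ge0// mulrA.
rewrite ler_sqrt ?mulr_ge0 ?sqr_ge0// ler_wpM2r//.
have s_ge1 : 1 <= s%:R :> R by rewrite ler1n.
rewrite -natr1; nra.
Qed.

Lemma penalty_mul_le (R : realType) (gamma : R) (k p s : nat) :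
  0 <= gamma -> (0 < k)%N -> 1 <= ln p%:R :> R ->
  s%:R * Num.sqrt (ln p%:R / k%:R) <= 1 :> R ->
  penalty gamma k p * s%:R <=
    k%:R * (1 + gamma) * (s%:R * Num.sqrt (ln p%:R / k%:R)).
Proof.
rewrite /penalty; set K := k%:R; set L := ln p%:R; set S := s%:R.
set x := S * _ => gamma_ge0 k_gt0 L_ge1 x_le1.
have K_gt0 : 0 < K by rewrite ltr0n.
have S_ge0 : 0 <= S by [].
have x_ge0 : 0 <= x by rewrite mulr_ge0 ?sqrtr_ge0.
have Kx2 : K * x ^+ 2 = S ^+ 2 * L.
  rewrite exprMn sqr_sqrtr ?divr_ge0 ?(ltW K_gt0)//; last lra.
  by rewrite mulrCA [K * _]mulrC divfK ?gt_eqF.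
have S_le_S2 : S <= S ^+ 2.
  by rewrite /S -natrX ler_nat; case: (s) => // m; rewrite leq_pmulr.
have lnK_le : ln K <= 2 * Num.sqrt K.
  have sqrtK_gt0 : 0 < Num.sqrt K by rewrite sqrtr_gt0.
  rewrite -[in ln K](sqr_sqrtr (ltW K_gt0)) expr2 lnM ?posrE//.
  by have := ln_sublinear sqrtK_gt0; lra.
have sqrtK_S : Num.sqrt K * S <= K * x.
  have : (Num.sqrt K * S) ^+ 2 <= (K * x) ^+ 2.
    have -> : (K * x) ^+ 2 = K * (S ^+ 2 * L) by rewrite -Kx2; ring.
    rewrite exprMn sqr_sqrtr ?(ltW K_gt0)// ler_wpM2l ?(ltW K_gt0)//.
    by rewrite ler_peMr ?sqr_ge0.
  by rewrite ler_sqr ?nnegrE ?mulr_ge0 ?sqrtr_ge0 ?(ltW K_gt0).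
have lnK_S : ln K * S <= 2 * (K * x).
  have : ln K * S <= 2 * Num.sqrt K * S by rewrite ler_wpM2r.
  lra.
have L_S : gamma * (L * S) <= gamma * (K * x).
  rewrite ler_wpM2l//; apply: (@le_trans _ _ (K * x ^+ 2)).
    by rewrite Kx2 mulrC ler_wpM2r //; lra.
  by rewrite ler_wpM2l ?(ltW K_gt0)// expr2 ler_piMl.
lra.
Qed.

Section rates.
Variable R : realType.
Local Open Scope classical_set_scope.

Lemma eventually_nat_gt (f : nat -> nat) :
  (forall M : nat, exists N : nat, forall n, (N <= n)%N -> (M <= f n)%N) ->
  forall x : R, \forall n \near \oo, x < (f n)%:R.
Proof.
move=> f_unbounded x.
have [N f_ge] := f_unbounded (Num.Def.archi_bound (Num.max x 0)).
have max_ge0 : 0 <= Num.max x 0 by rewrite le_max lexx orbT.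
exists N => // n /f_ge f_n; apply: le_lt_trans (_ : x <= Num.max x 0) _.
  by rewrite le_max lexx.
by apply: lt_le_trans (archi_boundP max_ge0) _; rewrite ler_nat.
Qed.

Variables k p s : nat -> nat.
Hypothesis k_unbounded :
  forall M : nat, exists N : nat, forall n, (N <= n)%N -> (M <= k n)%N.
Hypothesis p_unbounded :
  forall M : nat, exists N : nat, forall n, (N <= n)%N -> (M <= p n)%N.
Hypothesis rate_cvg0 :
  (fun n => (s n)%:R * Num.sqrt (ln (p n)%:R / (k n)%:R)) @ \oo --> (0 : R).

Local Notation rate n := ((s n)%:R * Num.sqrt (ln (p n)%:R / (k n)%:R) : R).

Lemma eventually_rate_le (e : R) : 0 < e -> \forall n \near \oo, rate n <= e.
Proof.
move=> e_gt0; near=> n.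
have : `|rate n| <= e by near: n; exact: cvgr0_norm_le.
by rewrite ger0_norm// mulr_ge0 ?sqrtr_ge0.
Unshelve. all: by end_near.
Qed.

Lemma eventually_eta_le (M e : R) : 0 < e -> \forall n \near \oo,
  (0 < s n)%N -> M * Num.sqrt ((s n).+1%:R * ln (p n)%:R / (k n)%:R) <= e.
Proof.
move=> e_gt0; have scale_gt0 : 0 < 2 * (`|M| + 1) by rewrite mulr_gt0// ltr_pwDr.
near=> n => s_gt0.
have rate_le : rate n <= e / (2 * (`|M| + 1)).
  by near: n; apply: eventually_rate_le; rewrite divr_gt0.
have LK_ge0 : 0 <= ln (p n)%:R / (k n)%:R :> R by rewrite divr_ge0 ?ln_nat_ge0.
have := sqrt_succ_mul_le s_gt0 LK_ge0; rewrite -mulrA.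
set u := Num.sqrt _ => sqrt_le.
have u_ge0 : 0 <= u by exact: sqrtr_ge0.
apply: (@le_trans _ _ (`|M| * u)); first by rewrite ler_wpM2r// ler_norm.
apply: (@le_trans _ _ (`|M| * (2 * (e / (2 * (`|M| + 1)))))).
  by rewrite ler_wpM2l// (le_trans sqrt_le)// ler_wpM2l.
have M1_gt0 : 0 < `|M| + 1 by rewrite ltr_pwDr.
have -> : `|M| * (2 * (e / (2 * (`|M| + 1)))) = e * (`|M| / (`|M| + 1)).
  by field; rewrite gt_eqF.
by rewrite ger_pMr// ler_pdivrMr// mul1r lerDl.
Unshelve. all: by end_near.
Qed.

Lemma eventually_penalty_lt (gamma c : R) : 0 <= gamma -> 0 < c ->
  \forall n \near \oo, penalty gamma (k n) (p n) * (s n)%:R < (k n)%:R / 2 * c.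
Proof.
move=> gamma_ge0 c_gt0.
have bound_gt0 : 0 < c / (4 * (1 + gamma)) by rewrite divr_gt0// mulr_gt0//; lra.
near=> n.
have k_gt0 : (0 < k n)%N.
  by rewrite -(@ltr0n R); near: n; exact: eventually_nat_gt.
have L_ge1 : 1 <= ln (p n)%:R :> R.
  apply/ltW/ln_gt_of_expR_lt; near: n; exact: eventually_nat_gt.
have rate_le1 : rate n <= 1 by near: n; exact: eventually_rate_le ltr01.
have rate_le : rate n <= c / (4 * (1 + gamma)).
  by near: n; exact: eventually_rate_le bound_gt0.
apply: le_lt_trans (penalty_mul_le gamma_ge0 k_gt0 L_ge1 rate_le1) _.
have K_gt0 : 0 < (k n)%:R :> R by rewrite ltr0n.
have : (1 + gamma) * rate n <= c / 4.
  by move: rate_le; rewrite ler_pdivlMr ?mulr_gt0//; lra.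
move: (rate n) => x; nra.
Unshelve. all: by end_near.
Qed.

Lemma eventually_penalty_gt (gamma M : R) : 0 <= gamma ->
  \forall n \near \oo, M < penalty gamma (k n) (p n).
Proof.
move=> gamma_ge0; near=> n.
have : 2 * M < ln (k n)%:R.
  by apply: ln_gt_of_expR_lt; near: n; exact: eventually_nat_gt.
have : 0 <= gamma * ln (p n)%:R by rewrite mulr_ge0 ?ln_nat_ge0.
rewrite /penalty; lra.
Unshelve. all: by end_near.
Qed.
End rates.

Theorem theorem4
  (R : realType) (dT : measure_display) (T : measurableType dT)
  (Prob : probability T R)
  (q gamma c3 : R) (hq : 0 < q < 1) (hgamma : 0 <= gamma) (hc3 : 0 < c3)
  (k p d s : nat -> nat)
  (Z : forall n, T -> 'I_(k n) -> 'I_(p n) -> R)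
  (Px : forall n, T -> 'I_(k n) -> 'I_(d n) -> R)
  (Ehat : forall n, T -> {set {set 'I_(p n)}})
  (Gstar : forall n, {ffun 'I_(p n) -> {set 'I_(p n)}})
  (Rstar : forall n, 'I_(p n) -> {set 'I_(p n)} -> R)
  (hk : forall M : nat, exists N : nat, forall n, (N <= n)%N -> (M <= k n)%N)
  (hp : forall M : nat, exists N : nat, forall n, (N <= n)%N -> (M <= p n)%N)
  (hdag : forall n, is_dag (Gstar n))
  (* (S) *)
  (hS : wptt1 Prob (fun n => [set w | skel (Gstar n) \subset Ehat n w
          /\ #|Ehat n w|%:R <= c3 * (p n)%:R * (s n)%:R
          /\ forall j, (#|Gstar n j| <= s n)%N]%classic))
  (* (C) *)
  (hC : Op_events Prob (fun M n => [set w | forall j A,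
          cand_class c3 (s n) (Gstar n) j A ->
          `| Rhat q (Z n w) (Px n w) j A - Rstar n j A |
            <= M * Num.sqrt ((s n).+1%:R * ln (p n)%:R / (k n)%:R)]%classic))
  (* (i) *)
  (Delta_miss : R) (hDelta : 0 < Delta_miss)
  (hi : forall n j A, cand_class c3 (s n) (Gstar n) j A ->
          ~~ (Gstar n j \subset A) ->
          Rstar n j A - Rstar n j (Gstar n j) >= Delta_miss)
  (* (ii) *)
  (hii : forall n j A, cand_class c3 (s n) (Gstar n) j A ->
          Gstar n j \subset A -> Rstar n j A = Rstar n j (Gstar n j))
  (* (iii) *)
  (rmin rmax : R) (hrmin : 0 < rmin) (hrminmax : rmin <= rmax)
  (hiii : forall n j A, cand_class c3 (s n) (Gstar n) j A ->
          rmin <= Rstar n j A <= rmax)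
  (* (iv): | max_j sup (fhat(Astar) - fhat(A)) / card(A minus Astar) | = O_p(1),
     with the convention sup over an empty family = 0 *)
  (hiv : Op_events Prob (fun M n => [set w |
          (forall j Astar A,
             cand_class c3 (s n) (Gstar n) j Astar ->
             cand_class c3 (s n) (Gstar n) j A ->
             Astar \proper A -> Rstar n j A = Rstar n j Astar ->
             (fhat q (Z n w) (Px n w) j Astar - fhat q (Z n w) (Px n w) j A)
               / #|A :\: Astar|%:R <= M)
          /\
          ((exists j Astar A,
             [/\ cand_class c3 (s n) (Gstar n) j Astar,
                 cand_class c3 (s n) (Gstar n) j A,
                 Astar \proper A & Rstar n j A = Rstar n j Astar]) ->
           exists j Astar A,
             [/\ cand_class c3 (s n) (Gstar n) j Astar,
                 cand_class c3 (s n) (Gstar n) j A,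
                 Astar \proper A, Rstar n j A = Rstar n j Astar &
                 - M <= (fhat q (Z n w) (Px n w) j Astar
                          - fhat q (Z n w) (Px n w) j A) / #|A :\: Astar|%:R])
          ]%classic))
  (* (v) *)
  (hv : ((fun n => (s n)%:R * Num.sqrt (ln (p n)%:R / (k n)%:R))
          @ \oo --> (0 : R))%classic) :
  wptt1 Prob (fun n => [set w | forall G : {ffun 'I_(p n) -> {set 'I_(p n)}},
      feasible (s n) (Ehat n w) G ->
      (forall G', feasible (s n) (Ehat n w) G' ->
         Shat q gamma (Z n w) (Px n w) G <= Shat q gamma (Z n w) (Px n w) G') ->
      G = Gstar n]%classic).
Proof.
(* Only the upper half of (iv) is needed. *)
have gap_gt0 : 0 < log_gap Delta_miss rmax.
  by apply: log_gap_gt0; rewrite // (le_trans (ltW hrmin)).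
apply: (wptt1_of_Op_events hS hC hiv) => MC MV.
near=> n => w [[[skel_Gstar [card_Ehat deg_Gstar]] Rhat_near] [fit_gain_le _]].
move=> G feasible_G G_min.
apply: (Shat_minimizer_eq
  (eta := MC * Num.sqrt ((s n).+1%:R * ln (p n)%:R / (k n)%:R)) (Miv := MV)
  hgamma hDelta hrmin _ deg_Gstar Rhat_near (hi n) (hii n) (hiii n) fit_gain_le
  _ _ _ (hdag n) skel_Gstar card_Ehat feasible_G G_min).
- by rewrite -(@ltr0n R); near: n; exact: eventually_nat_gt.
- move=> s_gt0; split; move: s_gt0; near: n;
    by apply: (eventually_eta_le hv); rewrite divr_gt0.
- by near: n; exact (eventually_penalty_lt hk hp hv hgamma gap_gt0).
- by near: n; exact (eventually_penalty_gt p hk MV hgamma).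
Unshelve. all: by end_near.
Qed.
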